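(* Let $(R_0,R_1,s,t,i,\circ)$ be a strict $2$-rack and let $X:=\ker(s)=\{f\in R_1:s(f)=1\}$. Then $x\cdot r:=x\lhd i(r)$ ($x\in X$, $r\in R_0$) defines an action of the rack $R_0$ on the set $X$, and the restriction $t|_{X}:X\to R_0$ satisfies $t(x\cdot r)=t(x)\lhd r$. Consequently $(R_0,X,t|_X)$ is a generalized augmented rack, and so (with the rack product $x\lhd' y:=x\cdot t(y)$ on $X$) $t|_X:X\to R_0$ is a crossed module of racks.
   Context: A (right) rack is a set with a binary operation $\lhd$ such that each $x\mapsto x\lhd y$ is bijective and $(x\lhd y)\lhd z=(x\lhd z)\lhd(y\lhd z)$; it is pointed if it has an element $1$ with $1\lhd x=1$, $x\lhd 1=x$. A strict $2$-rack is a category object in racks: pointed racks $R_0,R_1$, morphisms of pointed racks $s,t:R_1\to R_0$, $i:R_0\to R_1$, a composition $\circ:R_1\times_{R_0}R_1\to R_1$ which is a rack morphism, satisfying the category axioms (in particular $s\circ i=t\circ i=\mathrm{id}_{R_0}$). An action of a rack $R$ on a set $X$ is a family of bijections $x\mapsto x\cdot r$ with $(x\cdot r)\cdot r'=(x\cdot r')\cdot(r\lhd r')$. A generalized augmented rack is $(R,X,p)$ with $R$ a rack, $X$ an $R$-set and $p:X\to R$ a map with $p(x\cdot r)=p(x)\lhd r$. A crossed module of racks is a rack morphism $\mu:A\to B$ with an action of $B$ on $A$ by automorphisms (i.e. also $(a\lhd a')\cdot b=(a\cdot b)\lhd(a'\cdot b)$) such that $\mu(a\cdot b)=\mu(a)\lhd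 b$ and $a\cdot\mu(a')=a\lhd a'$. *)

From mathcomp Require Import ssreflect ssrfun ssrbool.
Set Implicit Arguments. Unset Strict Implicit. Unset Printing Implicit Defensive.

Definition is_rack (T : Type) (op : T -> T -> T) : Prop :=
  (forall y, bijective (fun x => op x y)) /\
  (forall x y z, op (op x y) z = op (op x z) (op y z)).

Definition is_pointed_rack (T : Type) (op : T -> T -> T) (e : T) : Prop :=
  is_rack op /\ (forall x, op e x = e) /\ (forall x, op x e = x).

Definition is_rack_morphism (T U : Type) (opT : T -> T -> T) (opU : U -> U -> U)
  (f : T -> U) : Prop := forall x y, f (opT x y) = opU (f x) (f y).

Definition is_pointed_rack_morphism (T U : Type) (opT : T -> T -> T) (eT : T)
  (opU : U -> U -> U) (eU : U) (f : T -> U) : Prop :=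
  is_rack_morphism opT opU f /\ f eT = eU.

Definition is_rack_action (R X : Type) (opR : R -> R -> R) (act : X -> R -> X) : Prop :=
  (forall r, bijective (fun x => act x r)) /\
  (forall x r r', act (act x r) r' = act (act x r') (opR r r')).

Definition is_gen_augmented_rack (R X : Type) (opR : R -> R -> R)
  (act : X -> R -> X) (p : X -> R) : Prop :=
  is_rack opR /\ is_rack_action opR act /\
  (forall x r, p (act x r) = opR (p x) r).

Definition is_crossed_module (A B : Type) (opA : A -> A -> A) (opB : B -> B -> B)
  (mu : A -> B) (act : A -> B -> A) : Prop :=
  is_rack opA /\ is_rack opB /\ is_rack_morphism opA opB mu /\
  is_rack_action opB act /\
  (forall a a' b, act (opA a a') b = opA (act a b) (act a' b)) /\
  (forall a b, mu (act a b) = opB (mu a) b) /\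
  (forall a a', act a (mu a') = opA a a').

(** Composition [comp g f]
    (= g o f) is defined (meaningful) when [src g = tgt f]; it is given as a
    total function whose values are only constrained on composable pairs,
    i.e. on the fibre product R1 x_{R0} R1. *)
Record strict2rack := Strict2Rack {
  R0 : Type; op0 : R0 -> R0 -> R0; one0 : R0;
  R1 : Type; op1 : R1 -> R1 -> R1; one1 : R1;
  src : R1 -> R0; tgt : R1 -> R0; idm : R0 -> R1;
  comp : R1 -> R1 -> R1;
  R0_pointed : is_pointed_rack op0 one0;
  R1_pointed : is_pointed_rack op1 one1;
  src_morph : is_pointed_rack_morphism op1 one1 op0 one0 src;
  tgt_morph : is_pointed_rack_morphism op1 one1 op0 one0 tgt;
  idm_morph : is_pointed_rack_morphism op0 one0 op1 one1 idm;
  comp_morph : forall g f g' f', src g = tgt f -> src g' = tgt f' ->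
      comp (op1 g g') (op1 f f') = op1 (comp g f) (comp g' f');
  src_comp : forall g f, src g = tgt f -> src (comp g f) = src f;
  tgt_comp : forall g f, src g = tgt f -> tgt (comp g f) = tgt g;
  src_idm : forall x, src (idm x) = x;
  tgt_idm : forall x, tgt (idm x) = x;
  comp_idl : forall f, comp (idm (tgt f)) f = f;
  comp_idr : forall f, comp f (idm (src f)) = f;
  comp_assoc : forall h g f, src h = tgt g -> src g = tgt f ->
      comp h (comp g f) = comp (comp h g) f
}.

Definition kerS (C : strict2rack) : Type := {f : R1 C | src f = one0 C}.

Lemma kerS_act_proof (C : strict2rack) (x : kerS C) (r : R0 C) :
  src (op1 (sval x) (idm r)) = one0 C.
Proof.
case: x => f /= Hf.
have [Hm _] := src_morph C.
rewrite Hm Hf src_idm.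
by have [_ [H _]] := R0_pointed C.
Qed.

Definition kerS_act (C : strict2rack) (x : kerS C) (r : R0 C) : kerS C :=
  exist _ (op1 (sval x) (idm r)) (kerS_act_proof x r).

Definition kerS_t (C : strict2rack) (x : kerS C) : R0 C := tgt (sval x).

Definition kerS_op (C : strict2rack) (x y : kerS C) : kerS C :=
  kerS_act x (kerS_t y).

From mathcomp Require Import ssreflect ssrfun ssrbool.
From Stdlib Require Import ProofIrrelevance.

Set Implicit Arguments.
Unset Strict Implicit.
Unset Printing Implicit Defensive.

(** Since [i] is a rack morphism, right translation by [i(r)] is an action of
    [R0] on all of [R1].  It maps [ker s] onto itself: [s(f <| i(r)) = s(f) <| r]
    and [1 <| r = 1], and right translations of [R0] are injective.  As [t] is a
    rack morphism, [t(x <| i(r)) = t(x) <| r].  Finally every generalized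
    augmented rack [(R, X, p)] is a crossed module for [x <|' y := x . p(y)],
    using the action law and [p(x . r) = p(x) <| r] to rewrite
    [(x . p(y)) . r] as [(x . r) . p(y . r)]. *)

Section Racks.

Variables (R S X : Type) (opR : R -> R -> R) (opS : S -> S -> S).

Lemma rack_translation_inj : is_rack opS -> forall y, injective (opS^~ y).
Proof. by case=> bij _ y; apply: bij_inj (bij y). Qed.

Lemma rack_action_of_morphism (f : R -> S) :
  is_rack opS -> is_rack_morphism opR opS f ->
  is_rack_action opR (fun x r => opS x (f r)).
Proof. by case=> bij dist fM; split=> // x r r'; rewrite dist fM. Qed.

Lemma crossed_module_of_gen_augmented_rack (act : X -> R -> X) (p : X -> R) :
  is_gen_augmented_rack opR act p ->
  is_crossed_module (fun x y => act x (p y)) opR p act.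
Proof.
case=> rackR [[bij actM] pM].
have actM_p x y r : act (act x (p y)) r = act (act x r) (p (act y r)).
  by rewrite actM pM.
have pM_p : is_rack_morphism (fun x y => act x (p y)) opR p by move=> x y; rewrite pM.
by do !split=> //; move=> x y z; rewrite actM_p.
Qed.

End Racks.

Lemma sval_inj (T : Type) (P : T -> Prop) : injective (@sval T P).
Proof. by case=> a Pa [b Pb] /= eq_ab; subst b; rewrite (proof_irrelevance _ Pa Pb). Qed.

Lemma sig_bijective (T : Type) (P : T -> Prop) (f : T -> T) (g : sig P -> sig P) :
  (forall x, sval (g x) = f (sval x)) -> (forall x, P (f x) -> P x) ->
  bijective f -> bijective g.
Proof.
move=> gE Pf [h hK Kh].
have Ph (y : sig P) : P (h (sval y)) by apply: Pf; rewrite Kh; exact: svalP.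
exists (fun y => exist P (h (sval y)) (Ph y)) => [x|y]; apply: sval_inj => /=.
  by rewrite gE hK.
by rewrite gE Kh.
Qed.

Section KernelOfSource.

Variable C : strict2rack.

Let rack0 : is_rack (@op0 C). Proof. by case: (R0_pointed C). Qed.
Let rack1 : is_rack (@op1 C). Proof. by case: (R1_pointed C). Qed.

Let idm_action : is_rack_action (@op0 C) (fun f r => op1 f (idm r)).
Proof. by apply: rack_action_of_morphism rack1 _; case: (idm_morph C). Qed.

Lemma src_act_idm (f : R1 C) r : src (op1 f (idm r)) = op0 (src f) r.
Proof. by case: (src_morph C) => srcM _; rewrite srcM src_idm. Qed.

Lemma kerS_rack_action : is_rack_action (@op0 C) (@kerS_act C).
Proof.
case: idm_action => bij actM; split=> [r|x r r'].
  apply: (@sig_bijective _ (fun f => src f = one0 C) _ _ _ _ (bij r)) => // f.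
  have [_ [one_op0 _]] := R0_pointed C.
  rewrite src_act_idm => srcE.
  by apply: (rack_translation_inj rack0 (y := r)); rewrite /= srcE one_op0.
by apply: sval_inj; exact: actM.
Qed.

Lemma kerS_t_act (x : kerS C) r : kerS_t (kerS_act x r) = op0 (kerS_t x) r.
Proof. by case: (tgt_morph C) => tgtM _; rewrite /kerS_t /= tgtM tgt_idm. Qed.

Lemma kerS_gen_augmented_rack :
  is_gen_augmented_rack (@op0 C) (@kerS_act C) (@kerS_t C).
Proof. by split; [exact: rack0 | split; [exact: kerS_rack_action | exact: kerS_t_act]]. Qed.

End KernelOfSource.

Theorem mainTheorem5 (C : strict2rack) :
  is_rack_action (@op0 C) (@kerS_act C) /\
  (forall (x : kerS C) (r : R0 C),
      kerS_t (kerS_act x r) = op0 (kerS_t x) r) /\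
  is_gen_augmented_rack (@op0 C) (@kerS_act C) (@kerS_t C) /\
  is_crossed_module (@kerS_op C) (@op0 C) (@kerS_t C) (@kerS_act C).
Proof.
split; first exact: kerS_rack_action.
split; first exact: kerS_t_act.
split; first exact: kerS_gen_augmented_rack.
exact: crossed_module_of_gen_augmented_rack (kerS_gen_augmented_rack C).
Qed.
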